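(* Let $\mathbf{x}_1,\dots,\mathbf{x}_n\in\mathbb{R}^d$ and define $L(\{\boldsymbol\mu_j\}_{j=1}^K,\{y_i\}_{i=1}^n)=\sum_{i=1}^n\|\mathbf{x}_i-\boldsymbol\mu_{y_i}\|_2^2$ for $\boldsymbol\mu_j\in\mathbb{R}^d$, $y_i\in[K]$. Let $\{\boldsymbol\mu_j^\star\},\{\hat{\boldsymbol\mu}_j\}\subseteq\mathbb{R}^d$, $\{y_i^\star\},\{\hat y_i\}\subseteq[K]$, $s=\min_{j\ne k}\|\boldsymbol\mu_j^\star-\boldsymbol\mu_k^\star\|_2$ and $n_{\min}=\min_{j\in[K]}|\{i:y_i^\star=j\}|$. Suppose that for some $C>0$ and $\delta\in(0,s/2)$: (1) $L(\{\hat{\boldsymbol\mu}_j\},\{\hat y_i\})\le C\cdot L(\{\boldsymbol\mu_j^\star\},\{y_i^\star\})$ and $\hat y_i\in\mathrm{argmin}_{j\in[K]}\|\mathbf{x}_i-\hat{\boldsymbol\mu}_j\|_2$ for all $i$; (2) $L(\{\boldsymbol\mu_j^\star\},\{y_i^\star\})\le\delta^2n_{\min}/[(1+\sqrt C)^2K]$. Then there exists a permutation $\tau$ of $[K]$ such that $\sum_{j=1}^K\|\boldsymbol\mu_j^\star-\hat{\boldsymbol\mu}_{\tau(j)}\|_2^2\le\frac{(1+\sqrt C)^2K}{n_{\min}}L(\{\boldsymbol\mu_j^\star\},\{y_i^\star\})$, $\{i:\hat y_i\ne\tau(y_i^\star)\}\subseteq\{i:\|\mathbf{x}_i-\boldsymbol\mu^\star_{y_i^\star}\|_2\ge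 s/2-\delta\}$, and $|\{i:\hat y_i\ne\tau(y_i^\star)\}|\le|\{i:\|\mathbf{x}_i-\boldsymbol\mu^\star_{y_i^\star}\|_2\ge s/2-\delta\}|\le\frac{L(\{\boldsymbol\mu_j^\star\},\{y_i^\star\})}{(s/2-\delta)^2}$. *)

From HB Require Import structures.
From mathcomp Require Import all_boot all_order all_algebra all_fingroup.
Set Implicit Arguments. Unset Strict Implicit. Unset Printing Implicit Defensive.
Import Order.TTheory GRing.Theory Num.Theory.
Local Open Scope ring_scope.

Definition sqnorm (R : rcfType) (d : nat) (v : 'rV[R]_d) : R :=
  \sum_(k < d) (v ord0 k) ^+ 2.
Definition norm2 (R : rcfType) (d : nat) (v : 'rV[R]_d) : R :=
  Num.sqrt (sqnorm v).

Definition kmloss (R : rcfType) (d n K : nat) (x : 'I_n -> 'rV[R]_d)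
  (mu : 'I_K -> 'rV[R]_d) (y : 'I_n -> 'I_K) : R :=
  \sum_(i < n) sqnorm (x i - mu (y i)).

(* s = min_{j <> k} ||mu_j - mu_k||  (meaningful when K >= 2) *)
Definition min_sep (R : rcfType) (d K : nat) (mu : 'I_K -> 'rV[R]_d) : R :=
  let ds := [seq norm2 (mu p.1 - mu p.2) | p <- enum [pred p : 'I_K * 'I_K | p.1 != p.2]] in
  \big[Num.min/head 0 ds]_(r <- ds) r.

(* n_min = min_j |{i : y_i = j}| (every count is <= n, so n is a neutral start) *)
Definition min_size (n K : nat) (y : 'I_n -> 'I_K) : nat :=
  \big[minn/n]_(j < K) #|[set i | y i == j]|.

From mathcomp Require Import all_boot all_order all_algebra all_fingroup.
From mathcomp Require Import ring lra.
Import Order.TTheory GRing.Theory Num.Theory.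
Set Implicit Arguments. Unset Strict Implicit. Unset Printing Implicit Defensive.
Local Open Scope ring_scope.

(* Match every true centre mu*_j with its nearest estimated centre
   muhat_(f j) and let m_j be their distance.  Going from mu*_(y*_i) through x_i to
   muhat_(yhat_i) gives m_(y*_i) <= a_i + b_i, where a_i and b_i are the
   distances from x_i to its true and to its estimated centre.  Young's
   inequality with weight sqrt C then bounds n_min * sum_j m_j^2 by
   (1 + sqrt C)^2 L*, so under (2) every m_j is at most delta < s/2: f is
   injective, hence a permutation tau.  A point with yhat_i <> tau (y*_i) has
   two centres mu*_(y*_i) and mu*_j', at distance >= s, within a_i and
   a_i + 2 delta of x_i, so a_i >= s/2 - delta; Markov's inequality counts
   such points. *)

Section EuclideanNorm.
Variables (R : rcfType) (d : nat).
Implicit Types u v w : 'rV[R]_d.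

Lemma sqnorm_ge0 v : 0 <= sqnorm v.
Proof. by apply: sumr_ge0 => k _; exact: sqr_ge0. Qed.

Lemma norm2_ge0 v : 0 <= norm2 v.
Proof. exact: sqrtr_ge0. Qed.

Lemma sqr_norm2 v : norm2 v ^+ 2 = sqnorm v.
Proof. by rewrite sqr_sqrtr // sqnorm_ge0. Qed.

Lemma sqnorm_eq0 v : (sqnorm v == 0) = (v == 0).
Proof.
apply/eqP/eqP => [v0|->]; last by rewrite /sqnorm big1 // => k _; rewrite mxE expr0n.
apply/rowP => k; rewrite mxE; apply/eqP; rewrite -sqrf_eq0; apply/eqP.
by move: k isT; apply: psumr_eq0P v0 => k _; exact: sqr_ge0.
Qed.

Lemma norm2N v : norm2 (- v) = norm2 v.
Proof. by congr Num.sqrt; apply: eq_bigr => k _; rewrite mxE sqrrN. Qed.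

Lemma norm2_subC u v : norm2 (u - v) = norm2 (v - u).
Proof. by rewrite -norm2N opprB. Qed.

Definition dotp u v : R := \sum_(k < d) u ord0 k * v ord0 k.

Lemma sqnormD u v : sqnorm (u + v) = sqnorm u + 2 * dotp u v + sqnorm v.
Proof.
rewrite /sqnorm /dotp mulr_sumr -!big_split /=.
by apply: eq_bigr => k _; rewrite mxE; ring.
Qed.

Lemma dotp_le_norm2 u v : dotp u v <= norm2 u * norm2 v.
Proof.
have [->|u0] := eqVneq u 0.
  by rewrite /dotp big1 ?mulr_ge0 ?norm2_ge0 // => k _; rewrite mxE mul0r.
have [->|v0] := eqVneq v 0.
  by rewrite /dotp big1 ?mulr_ge0 ?norm2_ge0 // => k _; rewrite mxE mulr0.
have norm2_gt0 w : w != 0 -> 0 < norm2 w.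
  by rewrite sqrtr_gt0 lt_def sqnorm_eq0 sqnorm_ge0 andbT.
set A := norm2 u; set B := norm2 v.
have AB_gt0 : 0 < A * B by rewrite mulr_gt0 ?norm2_gt0.
(* expanding the square gives 2 A B (A B - <u, v>) *)
have : 0 <= \sum_(k < d) (B * u ord0 k - A * v ord0 k) ^+ 2.
  by apply: sumr_ge0 => k _; exact: sqr_ge0.
rewrite (eq_bigr (fun k => B ^+ 2 * u ord0 k ^+ 2
    - 2 * (A * B) * (u ord0 k * v ord0 k) + A ^+ 2 * v ord0 k ^+ 2));
  last by move=> k _; ring.
rewrite big_split sumrB /= -!mulr_sumr -/(sqnorm u) -/(sqnorm v) -/(dotp u v).
rewrite -!sqr_norm2 -/A -/B.
nra.
Qed.

Lemma norm2D u v : norm2 (u + v) <= norm2 u + norm2 v.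
Proof.
have sum_ge0 : 0 <= norm2 u + norm2 v by rewrite addr_ge0 ?norm2_ge0.
rewrite -(ger0_norm sum_ge0) -sqrtr_sqr ler_sqrt ?sqr_ge0 // sqnormD.
by rewrite -!sqr_norm2; have := dotp_le_norm2 u v; lra.
Qed.

Lemma norm2_sub_le u v w : norm2 (u - w) <= norm2 (u - v) + norm2 (v - w).
Proof. by have := norm2D (u - v) (v - w); rewrite addrA subrK. Qed.

End EuclideanNorm.

Lemma kmloss_ge0 (R : rcfType) d n K (x : 'I_n -> 'rV[R]_d) (mu : 'I_K -> 'rV[R]_d)
  (y : 'I_n -> 'I_K) : 0 <= kmloss x mu y.
Proof. by apply: sumr_ge0 => i _; exact: sqnorm_ge0. Qed.

Lemma sqrD_le_Young (R : realFieldType) (t p q : R) : 0 < t ->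
  (p + q) ^+ 2 <= (1 + t) * p ^+ 2 + (1 + t^-1) * q ^+ 2.
Proof.
move=> t_gt0; rewrite -subr_ge0.
have -> : (1 + t) * p ^+ 2 + (1 + t^-1) * q ^+ 2 - (p + q) ^+ 2
    = t^-1 * (t * p - q) ^+ 2 by field; exact: lt0r_neq0.
by rewrite mulr_ge0 ?sqr_ge0 // invr_ge0 ltW.
Qed.

Lemma card_ge_mul_sqr_le_sum (R : realDomainType) (I : finType) (a : I -> R) e :
  0 <= e -> #|[set i | e <= a i]|%:R * e ^+ 2 <= \sum_i a i ^+ 2.
Proof.
move=> e_ge0; rewrite mulr_natl -sumr_const big_mkcond /=.
apply: ler_sum => i _; case: ifP => [|_]; last exact: sqr_ge0.
by rewrite inE => e_le; nra.
Qed.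

Lemma sum_comp_card (V : nmodType) (I J : finType) (y : I -> J) (F : J -> V) :
  \sum_i F (y i) = \sum_j F j *+ #|[set i | y i == j]|.
Proof.
rewrite (partition_big y xpredT) //=; apply: eq_bigr => j _.
rewrite (eq_bigr (fun=> F j)) => [|i /eqP -> //].
by rewrite sumr_const; congr (_ *+ _); apply: eq_card => i; rewrite inE.
Qed.

Lemma min_size_le n K (y : 'I_n -> 'I_K) j : (min_size y <= #|[set i | y i == j]|)%N.
Proof.
by rewrite /min_size -minEnat; exact: (bigmin_le _ j (fun j => #|[set i | y i == j]|)).
Qed.

Lemma min_size_mul_sum_le (R : numDomainType) n K (y : 'I_n -> 'I_K) (F : 'I_K -> R) :
  (forall j, 0 <= F j) -> (min_size y)%:R * \sum_j F j <= \sum_i F (y i).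
Proof.
move=> F_ge0; rewrite (sum_comp_card y) mulr_sumr; apply: ler_sum => j _.
by rewrite -[F j *+ _]mulr_natl ler_wpM2r // ler_nat min_size_le.
Qed.

Lemma min_sep_le (R : rcfType) d K (mu : 'I_K -> 'rV[R]_d) j k :
  j != k -> min_sep mu <= norm2 (mu j - mu k).
Proof.
move=> njk; rewrite /min_sep big_map big_enum_cond /=.
by apply: (bigmin_le_cond _ (j := (j, k))); rewrite inE andbT.
Qed.

Section KMeansRecovery.
Variables (R : rcfType) (d n K : nat) (x : 'I_n -> 'rV[R]_d).
Variables (mustar muhat : 'I_K -> 'rV[R]_d) (ystar yhat : 'I_n -> 'I_K).

Definition nearest (j : 'I_K) : 'I_K := [arg min_(k < j) norm2 (mustar j - muhat k)]%O.

Lemma nearestP j k : norm2 (mustar j - muhat (nearest j)) <= norm2 (mustar j - muhat k).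
Proof. by rewrite /nearest; case: arg_minP => // k' _; apply. Qed.

Lemma nearest_sum_sqr_le C : 0 < C ->
  kmloss x muhat yhat <= C * kmloss x mustar ystar ->
  \sum_i sqnorm (mustar (ystar i) - muhat (nearest (ystar i))) <=
    (1 + Num.sqrt C) ^+ 2 * kmloss x mustar ystar.
Proof.
move=> C_gt0 loss_le; set t := Num.sqrt C.
have t_gt0 : 0 < t by rewrite sqrtr_gt0.
pose a i := norm2 (x i - mustar (ystar i)); pose b i := norm2 (x i - muhat (yhat i)).
have term_le i : sqnorm (mustar (ystar i) - muhat (nearest (ystar i))) <=
    (1 + t) * a i ^+ 2 + (1 + t^-1) * b i ^+ 2.
  apply: le_trans (sqrD_le_Young _ _ t_gt0); rewrite -sqr_norm2.
  rewrite ler_sqr ?nnegrE ?addr_ge0 ?norm2_ge0 //.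
  apply: le_trans (nearestP _ (yhat i)) _.
  by apply: le_trans (norm2_sub_le _ (x i) _) _; rewrite [norm2 (_ - x i)]norm2_subC.
apply: le_trans (ler_sum _ (fun i _ => term_le i)) _.
rewrite big_split /= -!mulr_sumr.
under eq_bigr do rewrite sqr_norm2.
under [X in _ + _ * X]eq_bigr do rewrite sqr_norm2.
rewrite -/(kmloss x mustar ystar) -/(kmloss x muhat yhat).
have -> : (1 + t) ^+ 2 = (1 + t) + (1 + t^-1) * C.
  by rewrite -(sqr_sqrtr (ltW C_gt0)) -/t; field; exact: lt0r_neq0.
by rewrite [X in _ <= X]mulrDl lerD2l -mulrA ler_wpM2l // addr_ge0 // invr_ge0 ltW.
Qed.

Lemma min_size_mul_nearest_sum_le C : 0 < C ->
  kmloss x muhat yhat <= C * kmloss x mustar ystar ->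
  (min_size ystar)%:R * \sum_j sqnorm (mustar j - muhat (nearest j)) <=
    (1 + Num.sqrt C) ^+ 2 * kmloss x mustar ystar.
Proof.
move=> C_gt0 loss_le; apply: le_trans (nearest_sum_sqr_le C_gt0 loss_le).
by apply: min_size_mul_sum_le => j; exact: sqnorm_ge0.
Qed.

Lemma nearest_dist_le C delta : 0 < C -> 0 <= delta -> (0 < min_size ystar)%N ->
  kmloss x muhat yhat <= C * kmloss x mustar ystar ->
  kmloss x mustar ystar <=
    delta ^+ 2 * (min_size ystar)%:R / ((1 + Num.sqrt C) ^+ 2 * K%:R) ->
  forall j, norm2 (mustar j - muhat (nearest j)) <= delta.
Proof.
move=> C_gt0 delta_ge0 nmin_gt0 loss_le loss_small j.
have c_gt0 : 0 < (1 + Num.sqrt C) ^+ 2 by rewrite exprn_gt0 // addr_gt0 ?sqrtr_gt0.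
have K_ge1 : 1 <= K%:R :> R by rewrite ler1n (leq_ltn_trans _ (ltn_ord j)).
have nmin_gt0' : 0 < (min_size ystar)%:R :> R by rewrite ltr0n.
have cL_ge0 : 0 <= (1 + Num.sqrt C) ^+ 2 * kmloss x mustar ystar.
  by rewrite mulr_ge0 ?(ltW c_gt0) ?kmloss_ge0.
have cK_gt0 : 0 < (1 + Num.sqrt C) ^+ 2 * K%:R by rewrite mulr_gt0 // (lt_le_trans ltr01).
rewrite ler_pdivlMr // in loss_small.
have sum_le : \sum_k sqnorm (mustar k - muhat (nearest k)) <= delta ^+ 2.
  rewrite -(ler_pM2l nmin_gt0').
  by apply: le_trans (min_size_mul_nearest_sum_le C_gt0 loss_le) _; nra.
rewrite (bigD1 j) //= -sqr_norm2 in sum_le.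
have rest_ge0 : 0 <= \sum_(k | k != j) sqnorm (mustar k - muhat (nearest k)).
  by apply: sumr_ge0 => k _; exact: sqnorm_ge0.
by rewrite -ler_sqr ?nnegrE ?norm2_ge0 //; lra.
Qed.

Lemma close_map_injective (f : 'I_K -> 'I_K) delta :
  delta < min_sep mustar / 2 ->
  (forall j, norm2 (mustar j - muhat (f j)) <= delta) -> injective f.
Proof.
move=> delta_lt close j k fjk; apply/eqP; apply: contraTT delta_lt => njk.
have := norm2_sub_le (mustar j) (muhat (f j)) (mustar k).
rewrite fjk (norm2_subC (muhat _)) => hjk.
have := min_sep_le mustar njk; have := close j; have := close k; rewrite fjk.
by rewrite -leNgt; lra.
Qed.

Lemma misassigned_far (tau : {perm 'I_K}) delta :
  (forall i j, norm2 (x i - muhat (yhat i)) <= norm2 (x i - muhat j)) ->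
  (forall j, norm2 (mustar j - muhat (tau j)) <= delta) ->
  forall i, yhat i != tau (ystar i) ->
    min_sep mustar / 2 - delta <= norm2 (x i - mustar (ystar i)).
Proof.
move=> yhat_opt close i yhat_ne.
set j := ystar i; set j' := (tau^-1)%g (yhat i).
have tau_j' : tau j' = yhat i by rewrite permKV.
have nj : j != j' by apply: contraNneq yhat_ne => jj'; rewrite -tau_j' -jj'.
(* b_i <= a_i + delta through muhat_(tau j), and s <= a_i + b_i + delta through x_i *)
have b_le := le_trans (yhat_opt i (tau j)) (norm2_sub_le (x i) (mustar j) _).
have s_le := le_trans (min_sep_le mustar nj) (norm2_sub_le _ (x i) _).
have x_j' := norm2_sub_le (x i) (muhat (tau j')) (mustar j').
rewrite tau_j' in x_j'; rewrite norm2_subC in s_le.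
rewrite (norm2_subC (muhat _)) in x_j'.
have := close j; have := close j'; rewrite tau_j'; lra.
Qed.

End KMeansRecovery.

Theorem lemmaD1 (R : rcfType) (d n K : nat) (x : 'I_n -> 'rV[R]_d)
  (mustar muhat : 'I_K -> 'rV[R]_d) (ystar yhat : 'I_n -> 'I_K)
  (C delta : R) :
  (2 <= K)%N ->
  (0 < min_size ystar)%N ->
  0 < C ->
  0 < delta -> delta < min_sep mustar / 2 ->
  kmloss x muhat yhat <= C * kmloss x mustar ystar ->
  (forall i j, norm2 (x i - muhat (yhat i)) <= norm2 (x i - muhat j)) ->
  kmloss x mustar ystar <=
    delta ^+ 2 * (min_size ystar)%:R / ((1 + Num.sqrt C) ^+ 2 * K%:R) ->
  exists tau : {perm 'I_K},
    [/\ \sum_(j < K) sqnorm (mustar j - muhat (tau j)) <=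
          (1 + Num.sqrt C) ^+ 2 * K%:R / (min_size ystar)%:R * kmloss x mustar ystar,
        [set i | yhat i != tau (ystar i)] \subset
          [set i | min_sep mustar / 2 - delta <= norm2 (x i - mustar (ystar i))],
        leq #|[set i | yhat i != tau (ystar i)]|
          #|[set i | min_sep mustar / 2 - delta <= norm2 (x i - mustar (ystar i))]|
      & (#|[set i | min_sep mustar / 2 - delta <= norm2 (x i - mustar (ystar i))]|)%:R
          <= kmloss x mustar ystar / (min_sep mustar / 2 - delta) ^+ 2].
Proof.
move=> K_ge2 nmin_gt0 C_gt0 delta_gt0 delta_lt loss_le yhat_opt loss_small.
have close := nearest_dist_le C_gt0 (ltW delta_gt0) nmin_gt0 loss_le loss_small.
have tau_inj := close_map_injective delta_lt close.
exists (perm tau_inj).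
have close_tau j : norm2 (mustar j - muhat (perm tau_inj j)) <= delta by rewrite permE.
have far_sub : [set i | yhat i != perm tau_inj (ystar i)] \subset
    [set i | min_sep mustar / 2 - delta <= norm2 (x i - mustar (ystar i))].
  by apply/subsetP => i; rewrite !inE; exact: misassigned_far yhat_opt close_tau i.
split=> //; last 2 first.
- exact: subset_leq_card far_sub.
- rewrite ler_pdivlMr ?exprn_gt0 ?subr_gt0 //.
  under [X in _ <= X]eq_bigr do rewrite -sqr_norm2.
  by apply: card_ge_mul_sqr_le_sum; rewrite subr_ge0 ltW.
under eq_bigr do rewrite permE.
rewrite mulrAC ler_pdivlMr ?ltr0n // mulrC.
apply: le_trans (min_size_mul_nearest_sum_le C_gt0 loss_le) _.
rewrite [leRHS]mulrAC; apply: ler_peMr; first by rewrite mulr_ge0 ?sqr_ge0 ?kmloss_ge0.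
by rewrite ler1n ltnW.
Qed.
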